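(* For every integer $N\ge 1$ there exists a $2$-$(4,N,2)$-tropical protocol.
   Context: Tropical arithmetic on $\mathbb{R}\cup\{\infty\}$: $x\oplus y=\min(x,y)$, $x\odot y=x+y$, with $x\oplus\infty=x$ and $x\odot\infty=\infty$; for a matrix $S$ and vector $\mathbf{x}$, $(S\odot\mathbf{x})_t=\min_j(S_{tj}+x_j)$. An $R$-$(T,N,D)$-tropical protocol consists of $R$ functions $\mathcal{S}^{(1)},\dots,\mathcal{S}^{(R)}$: $S^{(1)}=\mathcal{S}^{(1)}()$ is a fixed matrix, and for $r\ge 2$, $S^{(r)}=\mathcal{S}^{(r)}$ applied to the results $\bigl(S^{(1)};\dots;S^{(r-1)}\bigr)\odot\mathbf{x}$ of all previous rounds (vertical stacking); each $S^{(r)}$ has $N$ columns, entries in $\{0\}\cup\mathbb{N}\cup\{\infty\}$, and a number of rows that may depend on previous results, the total number of rows being at most $T$ for every $\mathbf{x}$; and the final result $\bigl(S^{(1)};\dots;S^{(R)}\bigr)\odot\mathbf{x}$ determines $\mathbf{x}$ uniquely among all $\mathbf{x}\in(\{0\}\cup\mathbb{N}\cup\{\infty\})^N$ with at most $D$ finite entries. It is within maximum delay $\ell$ if all schedule matrices use only entries in $\{0,1,\dots,\ell,\infty\}$. *)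

From mathcomp Require Import all_boot.
Set Implicit Arguments. Unset Strict Implicit. Unset Printing Implicit Defensive.

(* Extended naturals {0} ∪ ℕ ∪ {∞}: [Some n] is the natural n, [None] is ∞. *)
Definition ext := option nat.

Definition tmul (a b : ext) : ext :=
  match a, b with Some m, Some n => Some (m + n) | _, _ => None end.

Definition tadd (a b : ext) : ext :=
  match a, b with
  | None, _ => b
  | _, None => a
  | Some m, Some n => Some (minn m n)
  end.

Definition row N := {ffun 'I_N -> ext}.
Definition vec N := {ffun 'I_N -> ext}.

Definition row_apply N (s : row N) (x : vec N) : ext :=
  \big[tadd/None]_(j < N) tmul (s j) (x j).

Definition mat_apply N (S : seq (row N)) (x : vec N) : seq ext :=
  map (fun s => row_apply s x) S.

(* A round function S^(r): maps the stacked results of all previous rounds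
   to the schedule matrix of round r (a list of rows; its number of rows may
   depend on previous results).  S^(1) is applied to the empty list of
   previous results, hence is a fixed matrix. *)
Definition round_fun N := seq ext -> seq (row N).

Definition protocol R N := R.-tuple (round_fun N).

Definition run_rounds N (fs : seq (round_fun N)) (x : vec N) : seq ext :=
  foldl (fun res f => res ++ mat_apply (f res) x) [::] fs.

Definition result R N (P : protocol R N) (x : vec N) : seq ext :=
  run_rounds P x.

Definition nfinite N (x : vec N) : nat := #|[set j | x j != None]|.

Definition is_tropical_protocol R T N D (P : protocol R N) : Prop :=
  (forall x : vec N, size (result P x) <= T) /\
  (forall x y : vec N, nfinite x <= D -> nfinite y <= D ->
     result P x = result P y -> x = y).
Arguments is_tropical_protocol R T N D P : clear implicits.

(* Round one reads q = min_j x_j and p = min_j (j + x_j); for a vector with a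
   single finite entry a at i this gives q = a and p = i + a, hence i = p - q.
   Round two masks the index c = p - q and applies two probes: the left one
   weights j by 2j, the right one by j, each adding a penalty N on the side of c
   it does not favour.  For two finite entries (i, a), (k, b) with i + a <= k + b
   there are two cases.  If a <= b then c = i and the probes see k alone; their
   readings differ by k + N or N - k, which reveals k and then b.  If b < a then
   i < c <= k: when c = k the probes see i alone as before, and otherwise they
   read 2i + a and k + b, both below the penalty threshold, which together with
   p = i + a and q = b determine everything. *)

From mathcomp Require Import all_boot.
From HB Require Import structures.
From mathcomp Require Import zify.

Set Implicit Arguments. Unset Strict Implicit. Unset Printing Implicit Defensive.

Lemma taddA : associative tadd.
Proof. by case=> [a|] [b|] [c|] //=; rewrite minnA. Qed.

Lemma taddC : commutative tadd.
Proof. by case=> [a|] [b|] //=; rewrite minnC. Qed.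

Lemma tadd0 : left_id None tadd.
Proof. by case. Qed.

HB.instance Definition _ := Monoid.isComLaw.Build ext None tadd taddA taddC tadd0.

Lemma tmulr0 a : tmul a None = None.
Proof. by case: a. Qed.

Section SparseVectors.
Variable N : nat.

Definition rowof (w : nat -> ext) : row N := [ffun j => w (val j)].

Definition vec0 : vec N := [ffun => None].

Definition vec1 e a : vec N := [ffun j : 'I_N => if val j == e then Some a else None].

Definition vec2 e1 a1 e2 a2 : vec N :=
  [ffun j : 'I_N => if val j == e1 then Some a1 else if val j == e2 then Some a2 else None].

Lemma vec2C e1 a1 e2 a2 : e1 != e2 -> vec2 e1 a1 e2 a2 = vec2 e2 a2 e1 a1.
Proof.
by move=> ne12; apply/ffunP => j; rewrite !ffunE; case: eqP => [->|//]; rewrite (negbTE ne12).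
Qed.

Lemma row_apply_vec0 w : row_apply (rowof w) vec0 = None.
Proof. by rewrite /row_apply big1 // => j _; rewrite !ffunE tmulr0. Qed.

Lemma row_apply_vec1 w e a : e < N -> row_apply (rowof w) (vec1 e a) = tmul (w e) (Some a).
Proof.
move=> lteN; rewrite /row_apply (bigD1 (Ordinal lteN)) //= big1 => [|j nej].
  by rewrite !ffunE /= eqxx; case: (tmul _ _).
rewrite !ffunE; case: eqP => [je|]; last by rewrite tmulr0.
by case/eqP: nej; apply: val_inj.
Qed.

Lemma row_apply_vec2 w e1 a1 e2 a2 : e1 < N -> e2 < N -> e1 != e2 ->
  row_apply (rowof w) (vec2 e1 a1 e2 a2) = tadd (tmul (w e1) (Some a1)) (tmul (w e2) (Some a2)).
Proof.
move=> lt1N lt2N ne12; rewrite /row_apply (bigD1 (Ordinal lt1N)) //=.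
have ne21 : Ordinal lt2N != Ordinal lt1N by rewrite -val_eqE /= eq_sym.
rewrite (bigD1 (Ordinal lt2N)) //= big1 => [|j /andP [nej1 nej2]].
  rewrite !ffunE /= eqxx eq_sym (negbTE ne12) eqxx.
  by case: (tmul _ _); case: (tmul _ _).
rewrite !ffunE; case: eqP => [je1|_]; first by case/eqP: nej1; apply: val_inj.
case: eqP => [je2|]; last by rewrite tmulr0.
by case/eqP: nej2; apply: val_inj.
Qed.

Lemma sparse_vecP (x : vec N) : nfinite x <= 2 ->
  [\/ x = vec0,
      exists i a, i < N /\ x = vec1 i a
    | exists i a k b, [/\ i < N, k < N, i != k & x = vec2 i a k b]].
Proof.
rewrite /nfinite; set A := [set j | x j != None] => leA2.
have inA j : (j \in A) = (x j != None) by rewrite inE.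
have : #|A| = 0 \/ #|A| = 1 \/ #|A| = 2 by lia.
case=> [/cards0_eq A0|[/eqP/cards1P [i A1]|/eqP/cards2P [i [k [neik A2]]]]].
- apply: Or31; apply/ffunP => j; rewrite ffunE.
  by apply/eqP; apply: negbNE; rewrite -inA A0 inE.
- apply: Or32; have : i \in A by rewrite A1 inE.
  rewrite inA; case xi: (x i) => [a|] // _.
  exists (val i), a; split; first exact: ltn_ord.
  apply/ffunP => j; rewrite ffunE val_eqE; case: eqP => [->//|nji].
  by apply/eqP; apply: negbNE; rewrite -inA A1 inE; apply/eqP.
- apply: Or33; have : i \in A by rewrite A2 !inE eqxx.
  rewrite inA; case xi: (x i) => [a|] // _.
  have : k \in A by rewrite A2 !inE eqxx orbT.
  rewrite inA; case xk: (x k) => [b|] // _.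
  exists (val i), a, (val k), b; split; rewrite ?ltn_ord ?val_eqE //.
  apply/ffunP => j; rewrite ffunE !val_eqE; case: eqP => [->//|nji].
  case: eqP => [->//|njk].
  by apply/eqP; apply: negbNE; rewrite -inA A2 !inE; apply/norP; split; apply/eqP.
Qed.

End SparseVectors.

Section Protocol.
Variable N : nat.

Definition left_probe c j : ext :=
  if j < c then Some (2 * j) else if c < j then Some (2 * j + N) else None.

Definition right_probe c j : ext :=
  if j < c then Some (N + j) else if c < j then Some j else None.

Definition min_row : row N := rowof N (fun _ => Some 0).

Definition index_row : row N := rowof N (fun j => Some j).

Definition round1 : round_fun N := fun _ => [:: min_row; index_row].

Definition masked_index (res : seq ext) : nat :=
  if res is [:: Some q; Some p] then p - q else 0.

Definition round2 : round_fun N :=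
  fun res => [:: rowof N (left_probe (masked_index res)); rowof N (right_probe (masked_index res))].

Definition protocol2 : protocol 2 N := [tuple round1; round2].

Definition decode (res : seq ext) : vec N :=
  match res with
  | [:: Some q; Some p; Some r; Some s] =>
      if (r < p + N) && (s < q + N) then vec2 N (r - p) (2 * p - r) (s - q) q
      else if r < s then let k := r + N - s in vec2 N (p - q) q k (s - N - k)
      else let k := r - s - N in vec2 N (p - q) q k (s - k)
  | [:: Some q; Some p; _; _] => vec1 N (p - q) q
  | _ => vec0 N
  end.

Lemma result_protocol2 x : result protocol2 x =
  let q := row_apply min_row x in
  let p := row_apply index_row x in
  let c := masked_index [:: q; p] in
  [:: q; p; row_apply (rowof N (left_probe c)) x; row_apply (rowof N (right_probe c)) x].
Proof. by []. Qed.

Lemma left_probe_lt c j : j < c -> left_probe c j = Some (2 * j).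
Proof. by move=> ltjc; rewrite /left_probe ltjc. Qed.

Lemma left_probe_gt c j : c < j -> left_probe c j = Some (2 * j + N).
Proof. by move=> ltcj; rewrite /left_probe ltnNge (ltnW ltcj) ltcj. Qed.

Lemma left_probe_at c : left_probe c c = None.
Proof. by rewrite /left_probe ltnn. Qed.

Lemma right_probe_lt c j : j < c -> right_probe c j = Some (N + j).
Proof. by move=> ltjc; rewrite /right_probe ltjc. Qed.

Lemma right_probe_gt c j : c < j -> right_probe c j = Some j.
Proof. by move=> ltcj; rewrite /right_probe ltnNge (ltnW ltcj) ltcj. Qed.

Lemma right_probe_at c : right_probe c c = None.
Proof. by rewrite /right_probe ltnn. Qed.

Lemma decode_vec2_sorted i a k b : i < N -> k < N -> i != k -> i + a <= k + b ->
  decode (result protocol2 (vec2 N i a k b)) = vec2 N i a k b.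
Proof.
move=> ltiN ltkN neik le_ab.
rewrite result_protocol2 /= !row_apply_vec2 //= (minn_idPl le_ab).
case: (leqP a b) => [le_ab'|lt_ba].
- rewrite addnK left_probe_at right_probe_at /=.
  have [ltik|ltki] : i < k \/ k < i by lia.
  + rewrite left_probe_gt // right_probe_gt //= ifF; last lia.
    by rewrite ifF; [congr vec2; lia | lia].
  + rewrite left_probe_lt // right_probe_lt //= ifF; last lia.
    by rewrite ifT; [congr vec2; lia | lia].
- have ltic : i < i + a - b by lia.
  have [eq_ck|lt_ck] : i + a - b = k \/ i + a - b < k by lia.
  + have ltik : i < k by lia.
    rewrite eq_ck left_probe_lt // right_probe_lt // left_probe_at right_probe_at /= ifF; last lia.
    by rewrite ifT; [rewrite vec2C; [congr vec2; lia | apply/eqP; lia] | lia].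
  + rewrite left_probe_lt // left_probe_gt // right_probe_lt // right_probe_gt //=.
    by rewrite ifT; [congr vec2; lia | lia].
Qed.

Lemma decode_vec2 i a k b : i < N -> k < N -> i != k ->
  decode (result protocol2 (vec2 N i a k b)) = vec2 N i a k b.
Proof.
move=> ltiN ltkN neik; have [le_ab|lt_ba] := leqP (i + a) (k + b).
  exact: decode_vec2_sorted.
by rewrite vec2C // decode_vec2_sorted 1?eq_sym // ltnW.
Qed.

Lemma decode_vec1 i a : i < N -> decode (result protocol2 (vec1 N i a)) = vec1 N i a.
Proof.
move=> ltiN; rewrite result_protocol2 /= !row_apply_vec1 //= addnK.
by rewrite left_probe_at right_probe_at.
Qed.

Lemma decode_vec0 : decode (result protocol2 (vec0 N)) = vec0 N.
Proof. by rewrite result_protocol2 /= !row_apply_vec0. Qed.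

Lemma decode_result (x : vec N) : nfinite x <= 2 -> decode (result protocol2 x) = x.
Proof.
case/sparse_vecP => [->|[i [a [ltiN ->]]]|[i [a [k [b [ltiN ltkN neik ->]]]]]].
- exact: decode_vec0.
- exact: decode_vec1.
- exact: decode_vec2.
Qed.

End Protocol.

Theorem mainTheorem16 (N : nat) (hN : 1 <= N) :
  exists P : protocol 2 N, is_tropical_protocol 2 4 N 2 P.
Proof.
exists (protocol2 N); split=> [x|x y /decode_result dx /decode_result dy eq_xy].
  by rewrite result_protocol2.
by rewrite -dx -dy eq_xy.
Qed.
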